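(* For every integer $\ell\geq 3$, $$\mathfrak K(3\cdot 2^{\ell-2}+1)>\frac{5\cdot 2^{2\ell-3}}{3\cdot 2^{\ell-2}+1}\qquad\text{and}\qquad \mathfrak K(2^{\ell-1}+3)>\frac{2^{2\ell-2}}{2^{\ell-1}+3}.$$
   Context: The Thue–Morse word is $\mathbf t=\mathbf t_1\mathbf t_2\cdots$ where $\mathbf t_i\in\{0,1\}$ has the parity of the number of $1$'s in the binary expansion of $i-1$. For positive integers $\alpha\le\beta$, $\langle\alpha,\beta\rangle=\mathbf t_\alpha\cdots\mathbf t_\beta$. A $k$-anti-power is a word $w_1\cdots w_k$ with $w_1,\dots,w_k$ pairwise distinct words of equal length. For a positive integer $m$, $\mathfrak K(m)$ is the smallest positive integer $k$ such that the prefix $\langle 1,km\rangle$ of $\mathbf t$ is not a $k$-anti-power. *)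

From mathcomp Require Import all_boot.
Set Implicit Arguments. Unset Strict Implicit. Unset Printing Implicit Defensive.

Fixpoint popcount_aux (fuel n : nat) : nat :=
  match fuel with
  | 0 => 0
  | f.+1 => if n is 0 then 0 else odd n + popcount_aux f n./2
  end.
Definition popcount (n : nat) : nat := popcount_aux n n.

(* Thue-Morse word, 1-indexed: t_i = parity of popcount (i-1) *)
Definition tm (i : nat) : bool := odd (popcount i.-1).

Definition tm_factor (alpha beta : nat) : seq bool :=
  [seq tm i | i <- iota alpha (beta.+1 - alpha)].

Definition anti_power (k : nat) (w : seq bool) : bool :=
  (0 < k) && (k %| size w) &&
  uniq [seq take (size w %/ k) (drop (j * (size w %/ k)) w) | j <- iota 0 k].

Definition is_frakK (m k : nat) : Prop :=
  0 < k /\ ~~ anti_power k (tm_factor 1 (k * m)) /\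
  forall k', 0 < k' < k -> anti_power k' (tm_factor 1 (k' * m)).

Goal [seq tm i | i <- iota 1 8] = [:: false; true; true; false; true; false; false; true]. by []. Qed.
Goal anti_power 2 [:: false; true; true; false]. by []. Qed.
Goal ~~ anti_power 2 [:: false; true; false; true]. by []. Qed.

From mathcomp Require Import all_boot zify.

(* Write t for the Thue-Morse word indexed from 0.  K(m) is j + 1 for the least j
   such that the j-th block of length m of t equals an earlier block.  Two
   occurrences of a factor of t longer than 3 * 2^k start at positions congruent
   modulo 2^(k+1): a factor of length 4 determines the parity of its position, and
   halving the positions lowers k.  Both moduli m = 3 * 2^r + 1 and m = 2^(r+1) + 3
   are odd, so equal blocks i < j lying below the claimed bound force j = i + 2^s,
   with 2^s = 2^(r+1), resp. 2^r.  Since t(y + 2^s m) = t(y) + t(q) + t(q + m)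
   (mod 2) for q = y / 2^s, the equality of the two blocks means t(q + m) = t(q) for
   a few consecutive q < 2^(r+1); there t(q + m) is t(q + 1), resp. the complement
   of t(q + 3), which would produce a cube, resp. a factor a b c a' b' (primes
   denoting complements), and t contains neither.  An explicit pair of equal blocks
   shows that K(m) exists; the cases l <= 5 are checked by computation. *)

(* [tm0 n] is [tm n.+1]. *)
Definition tm0 (n : nat) : bool := odd (popcount n).

Lemma popcount_aux_fuel f g n : n <= f -> n <= g -> popcount_aux f n = popcount_aux g n.
Proof.
elim: f g n => [|f IHf] g n; first by rewrite leqn0 => /eqP -> _; case: g.
case: n => [|n] nf; first by case: g.
by case: g => [|g] // ng /=; rewrite (IHf g) // leq_uphalf_double; lia.
Qed.

Lemma popcountE n : popcount n = odd n + popcount n./2.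
Proof.
case: n => [|n] //; rewrite [LHS](_ : _ = odd n.+1 + popcount_aux n n.+1./2) //.
by rewrite (popcount_aux_fuel _ n.+1./2) // -divn2; lia.
Qed.

Lemma popcount_bit_double (b : bool) n : popcount (b + n.*2) = b + popcount n.
Proof.
rewrite popcountE oddD odd_double addbF oddb; congr (_ + popcount _).
by case: b; rewrite /= ?add0n ?doubleK ?uphalf_double.
Qed.

Lemma tm0_bit_double (b : bool) n : tm0 (b + n.*2) = b (+) tm0 n.
Proof. by rewrite /tm0 popcount_bit_double oddD; case: b. Qed.

Lemma tm0_double n : tm0 (2 * n) = tm0 n.
Proof. by rewrite mul2n; exact: (tm0_bit_double false). Qed.

Lemma tm0_double1 n : tm0 (2 * n + 1) = ~~ tm0 n.
Proof. by rewrite mul2n addnC; exact: (tm0_bit_double true). Qed.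

Lemma tm0_pow2_mul_add s a b : b < 2 ^ s -> tm0 (2 ^ s * a + b) = tm0 a (+) tm0 b.
Proof.
elim: s a b => [|s IHs] a b; first by rewrite ltnS leqn0 => /eqP ->; rewrite addn0 addbF mul1n.
move=> lt_b; rewrite -(odd_double_half b).
have -> : 2 ^ s.+1 * a + (odd b + b./2.*2) = odd b + (2 ^ s * a + b./2).*2.
  by rewrite expnS -!mul2n; lia.
rewrite !tm0_bit_double IHs; first by case: (odd b); case: (tm0 a).
by move: lt_b; rewrite expnS -divn2 ltn_divLR //; lia.
Qed.

Lemma tm0_pow2_add s b : b < 2 ^ s -> tm0 (2 ^ s + b) = ~~ tm0 b.
Proof. by move=> lt_b; rewrite -{1}(muln1 (2 ^ s)) tm0_pow2_mul_add. Qed.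

Lemma tm0_3pow2_add r w : w < 2 ^ r.+1 -> tm0 (3 * 2 ^ r + w) = tm0 w.
Proof.
move=> lt_w; case: (ltnP w (2 ^ r)) => [small|big].
  rewrite (_ : _ + w = 2 ^ r.+1 + (2 ^ r + w)); last by rewrite expnS; lia.
  by rewrite !tm0_pow2_add ?negbK // expnS; lia.
rewrite -(subnKC big) (_ : _ + _ = 2 ^ r.+2 + (w - 2 ^ r)); last by rewrite !expnS; lia.
by rewrite !tm0_pow2_add // ?expnS; move: lt_w; rewrite expnS; lia.
Qed.

Lemma tm0_add_pow2_mul s y m :
  tm0 (y + 2 ^ s * m) = tm0 y (+) tm0 (y %/ 2 ^ s) (+) tm0 (y %/ 2 ^ s + m).
Proof.
have lt_mod : y %% 2 ^ s < 2 ^ s by rewrite ltn_pmod ?expn_gt0.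
rewrite {1 2}(divn_eq y (2 ^ s)) mulnC -addnA [_ %% _ + _]addnC addnA -mulnDr.
rewrite !tm0_pow2_mul_add //.
by case: (tm0 (y %/ 2 ^ s)); case: (tm0 (y %% 2 ^ s)); case: (tm0 (y %/ 2 ^ s + m)).
Qed.

Lemma tm0_succ_even n : ~~ odd n -> tm0 n.+1 = ~~ tm0 n.
Proof.
move=> even_n; rewrite -(odd_double_half n) (negbTE even_n) add0n -addn1 -!mul2n.
by rewrite tm0_double1 tm0_double.
Qed.

Lemma tm0_no_cube n : ~ (tm0 n = tm0 n.+1 /\ tm0 n.+1 = tm0 n.+2).
Proof.
case=> e1 e2; case: (boolP (odd n)) => [od|ev].
  by move: e2; rewrite (tm0_succ_even n.+1) /= ?od //; case: (tm0 n.+1).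
by move: e1; rewrite (tm0_succ_even n) //; case: (tm0 n).
Qed.

Lemma tm0_alternating4_even p :
  tm0 p != tm0 p.+1 -> tm0 p.+1 != tm0 p.+2 -> tm0 p.+2 != tm0 p.+3 -> ~~ odd p.
Proof.
case: (boolP (odd p)) => // od; have [c ->] : exists c, p = 2 * c + 1.
  by exists p./2; rewrite -[p in LHS]odd_double_half od -mul2n addnC.
have -> : (2 * c + 1).+1 = 2 * c.+1 by lia.
have -> : (2 * c.+1).+1 = 2 * c.+1 + 1 by lia.
have -> : (2 * c.+1 + 1).+1 = 2 * c.+2 by lia.
rewrite !tm0_double1 !tm0_double => e1 _ e3; exfalso; apply: (tm0_no_cube c).
by move: e1 e3; case: (tm0 c); case: (tm0 c.+1); case: (tm0 c.+2).
Qed.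

Lemma tm0_no_antiperiod3 u : ~ (forall k, k < 2 -> tm0 (u + k + 3) = ~~ tm0 (u + k)).
Proof.
move=> H; move: (H 0 isT) (H 1 isT); rewrite addn0 addn1 !addn3 => h3 h4.
have := tm0_no_cube u; have := tm0_no_cube u.+1; have := tm0_no_cube u.+2.
have := tm0_alternating4_even u; have := tm0_alternating4_even u.+1.
rewrite /= h3 h4.
case: (odd u); case: (tm0 u); case: (tm0 u.+1); case: (tm0 u.+2) => /= alt1 alt0.
all: by [tauto | have := alt0 isT isT isT | have := alt1 isT isT isT].
Qed.

Lemma tm0_match_odd p q :
  (forall x, x < 4 -> tm0 (p + x) = tm0 (q + x)) -> odd p = odd q.
Proof.
wlog /andP [odd_p even_q] : p q / odd p && ~~ odd q.
  move=> W H; have [/W -> //|] := boolP (odd p && ~~ odd q).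
  have [/W eqp _|] := boolP (odd q && ~~ odd p); first by rewrite eqp // => x /H ->.
  by case: (odd p); case: (odd q).
move=> H; suff: ~~ odd p by rewrite odd_p.
apply: tm0_alternating4_even.
- by move: (H 0 isT) (H 1 isT); rewrite !addn0 !addn1 (tm0_succ_even q) // => -> ->; case: (tm0 q).
- by rewrite (tm0_succ_even p.+1) /= ?odd_p //; case: (tm0 p.+1).
- move: (H 2 isT) (H 3 isT); rewrite !addn2 !addn3 (tm0_succ_even q.+2) /= ?even_q //.
  by move=> -> ->; case: (tm0 q.+2).
Qed.

Lemma tm0_match_half p q L : odd p = odd q ->
    (forall x, x < L -> tm0 (p + x) = tm0 (q + x)) ->
  forall y, y < uphalf L -> tm0 (p./2 + y) = tm0 (q./2 + y).
Proof.
move=> epq H y; rewrite gtn_uphalf_double => lt_y.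
have ep : p = 2 * p./2 + odd p by have := odd_double_half p; rewrite -mul2n; lia.
have eq : q = 2 * q./2 + odd p by have := odd_double_half q; rewrite -mul2n epq; lia.
case: (boolP (odd p)) => op; last first.
  have := H y.*2 lt_y; rewrite -mul2n; rewrite (negbTE op) in ep eq.
  have -> : p + 2 * y = 2 * (p./2 + y) by lia.
  have -> : q + 2 * y = 2 * (q./2 + y) by lia.
  by rewrite !tm0_double.
rewrite op in ep eq; case: y lt_y => [|y] lt_y.
  have := H 0 (leq_ltn_trans (leq0n _) lt_y); rewrite !addn0 {1}ep {1}eq.
  by rewrite !tm0_double1 => /negb_inj.
have := H y.*2.+1 (ltnW lt_y); rewrite -mul2n.
have -> : p + (2 * y).+1 = 2 * (p./2 + y.+1) by lia.
have -> : q + (2 * y).+1 = 2 * (q./2 + y.+1) by lia.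
by rewrite !tm0_double.
Qed.

Lemma tm0_match_dvd k p q L : p <= q -> 3 * 2 ^ k < L ->
  (forall x, x < L -> tm0 (p + x) = tm0 (q + x)) -> 2 ^ k.+1 %| q - p.
Proof.
elim: k p q L => [|k IHk] p q L le_pq lt_L H.
all: have epq : odd p = odd q by apply: tm0_match_odd => x lt_x; apply: H;
       apply: leq_trans lt_L; rewrite ?expnS; lia.
  by rewrite dvdn2 oddB // epq addbb.
have halves : q - p = 2 * (q./2 - p./2).
  by have := odd_double_half p; have := odd_double_half q; rewrite epq -!mul2n; lia.
rewrite halves expnS dvdn_pmul2l //; apply: (IHk _ _ (uphalf L)).
- exact: half_leq.
- by rewrite gtn_uphalf_double; move: lt_L; rewrite expnS; lia.
- exact: tm0_match_half.
Qed.

Definition block m j : seq bool := [seq tm0 i | i <- iota (j * m) m].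

Definition blocks_agree m i j : Prop :=
  forall x, x < m -> tm0 (i * m + x) = tm0 (j * m + x).

Lemma tm_factor1E n : tm_factor 1 n = [seq tm0 i | i <- iota 0 n].
Proof.
rewrite /tm_factor subSS subn0 -[1]addn0 iotaDl -map_comp.
by apply: eq_map => i /=; rewrite /tm add1n.
Qed.

Lemma anti_power_blocks k m : 0 < k ->
  anti_power k (tm_factor 1 (k * m)) = uniq [seq block m j | j <- iota 0 k].
Proof.
move=> k_gt0; rewrite /anti_power tm_factor1E size_map size_iota mulKn //.
rewrite dvdn_mulr // k_gt0 /=; congr uniq; apply/eq_in_map => j.
rewrite mem_iota add0n => /andP [_ lt_jk].
rewrite /block -map_drop -map_take drop_iota take_iota add0n (minn_idPl _) //.
by rewrite -mulnBl leq_pmull // subn_gt0.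
Qed.

Lemma block_eqP m i j : block m i = block m j <-> blocks_agree m i j.
Proof.
split=> [e x lt_x|H].
  by have := congr1 (nth false ^~ x) e; rewrite /= !(nth_map 0) ?size_iota // !nth_iota.
apply: (@eq_from_nth _ false); rewrite ?size_map ?size_iota // => x lt_x.
by rewrite !(nth_map 0) ?size_iota // !nth_iota // H.
Qed.

Lemma frakK_exists_gt m B : 0 < m ->
    (exists i j, i < j /\ blocks_agree m i j) ->
    (forall i j, i < j -> (j + 1) * m <= B -> ~ blocks_agree m i j) ->
  exists K, is_frakK m K /\ B < K * m.
Proof.
move=> m_gt0 [i0 [j0 [lt0 agree0]]] early.
pose repeated k := (0 < k) && ~~ anti_power k (tm_factor 1 (k * m)).
have ex_rep : exists k, repeated k.
  exists j0.+1; rewrite /repeated anti_power_blocks //; apply/(uniqPn [::]).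
  exists i0, j0; rewrite size_map size_iota !(nth_map 0) ?size_iota ?nth_iota //;
    last 2 first; [exact: ltnW | exact: ltnW | by split=> //; apply/block_eqP].
case: (ex_minnP ex_rep) => K /andP [K_gt0 notK] minK; exists K; split.
  split=> //; split=> // k /andP [k_gt0 lt_kK]; apply/negPn/negP => notk.
  by have := minK k; rewrite /repeated k_gt0 notk => /(_ isT); rewrite leqNgt lt_kK.
rewrite ltnNge; apply/negP => le_KmB.
move: notK; rewrite anti_power_blocks // => /(uniqPn [::]) [i [j [lt_ij lt_jK]]].
rewrite size_map size_iota in lt_jK; rewrite !(nth_map 0) ?size_iota ?nth_iota //;
  try exact: ltn_trans lt_ij lt_jK.
move/block_eqP; apply: early lt_ij _; apply: leq_trans le_KmB.
by rewrite leq_mul2r addn1 lt_jK orbT.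
Qed.

Lemma blocks_agree_pow2_shift s m i :
  blocks_agree m i (i + 2 ^ s) <->
  forall q, i * m %/ 2 ^ s <= q <= (i * m + m.-1) %/ 2 ^ s -> tm0 (q + m) = tm0 q.
Proof.
have [->|m_gt0] := posnP m; first by split=> // _ q _; rewrite addn0.
have P_gt0 : 0 < 2 ^ s by rewrite expn_gt0.
have key y : (tm0 y == tm0 (y + 2 ^ s * m)) = (tm0 (y %/ 2 ^ s + m) == tm0 (y %/ 2 ^ s)).
  rewrite tm0_add_pow2_mul.
  by case: (tm0 y); case: (tm0 (y %/ 2 ^ s)); case: (tm0 (y %/ 2 ^ s + m)).
have shiftE x : (i + 2 ^ s) * m + x = i * m + x + 2 ^ s * m by rewrite mulnDl; lia.
split=> [agree q /andP [lo hi]|H x lt_x].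
  pose x := q * 2 ^ s - i * m.
  have lt_x : x < m by move: hi; rewrite leq_divRL // /x; lia.
  have eq_q : (i * m + x) %/ 2 ^ s = q.
    case: (leqP (q * 2 ^ s) (i * m)) => [le_qim|lt_imq].
      by rewrite /x (eqP le_qim) addn0; apply/eqP; rewrite eqn_leq lo leq_divRL.
    by rewrite /x subnKC ?mulnK // ltnW.
  by apply/eqP; rewrite -eq_q -key -shiftE; apply/eqP/agree.
apply/eqP; rewrite shiftE key; apply/eqP/H.
by rewrite !leq_div2r // ?leq_addr // leq_add2l -ltnS prednK.
Qed.

Lemma blocks_agree_dvd k m i j : odd m -> 3 * 2 ^ k < m -> i <= j ->
  blocks_agree m i j -> 2 ^ k.+1 %| j - i.
Proof.
move=> odd_m lt_m le_ij agree.
have := tm0_match_dvd k _ _ _ (leq_mul le_ij (leqnn m)) lt_m agree.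
by rewrite -mulnBl Gauss_dvdl // coprimeXl // coprime2n.
Qed.

(* This choice of i puts the whole range of q below into [2^(r+1) + 2, 2^(r+1) + 4],
   where t(q + m) = t(q) reduces to t(v + 1) = ~~ t(v) for v = 2, 3, 4. *)
Lemma blocks_agree_3pow2_add1 r : 3 <= r ->
  exists i j, i < j /\ blocks_agree (3 * 2 ^ r + 1) i j.
Proof.
move=> r_ge3; have N_ge8 : 8 <= 2 ^ r by rewrite (_ : 8 = 2 ^ 3) // leq_pexp2l.
pose i := (4 * 2 ^ r + 5) %/ 3.
have i_bounds : 4 * 2 ^ r + 3 <= 3 * i <= 4 * 2 ^ r + 5.
  by have := divn_eq (4 * 2 ^ r + 5) 3; have := ltn_pmod (4 * 2 ^ r + 5) (isT : 0 < 3); lia.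
exists i, (i + 2 ^ r.+1); split; first by rewrite -addn1 leq_add2l expn_gt0.
apply/blocks_agree_pow2_shift => q.
rewrite -ltnS ltn_divLR ?leq_divRL ?expn_gt0 // expnS => /andP [lo hi].
have [v [-> v_range]] : exists v, q = 2 * 2 ^ r + v /\ 2 <= v <= 4.
  by exists (q - 2 * 2 ^ r); split; move: (2 ^ r) N_ge8 i_bounds lo hi => N; nia.
rewrite (_ : _ + _ + _ = 2 ^ r.+2 + (2 ^ r + v.+1)); last by rewrite !expnS; lia.
rewrite -expnS !tm0_pow2_add ?negbK; try by rewrite ?expnS; lia.
by case: v v_range => [|[|[|[|[|]]]]].
Qed.

Lemma no_early_repeat_3pow2_add1 r i j : 3 <= r -> i < j ->
  (j + 1) * (3 * 2 ^ r + 1) <= 10 * 2 ^ r * 2 ^ r ->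
  ~ blocks_agree (3 * 2 ^ r + 1) i j.
Proof.
move=> r_ge3 lt_ij j_small agree.
have N_ge8 : 8 <= 2 ^ r by rewrite (_ : 8 = 2 ^ 3) // leq_pexp2l.
have odd_m : odd (3 * 2 ^ r + 1).
  by rewrite addn1 /= oddM negb_and -(subnKC r_ge3) expnS oddM.
have lt_m : 3 * 2 ^ r < 3 * 2 ^ r + 1 by rewrite addn1.
have /dvdnP [c ec] := blocks_agree_dvd r _ _ _ odd_m lt_m (ltnW lt_ij) agree.
have j_lt : j < 4 * 2 ^ r by move: (2 ^ r) N_ge8 j_small => N; nia.
have ej : j = i + 2 ^ r.+1.
  by move: ec; rewrite expnS; case: c => [|[|c]]; lia.
rewrite ej in agree j_small; move/blocks_agree_pow2_shift: agree => agree.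
have := leq_divM (i * (3 * 2 ^ r + 1)) (2 ^ r.+1).
set q0 := _ %/ _; rewrite expnS => q0_le.
have q0_small : q0 + 2 < 2 * 2 ^ r.
  by move: j_small q0_le; rewrite expnS; move: (2 ^ r) N_ge8 => N; nia.
have step q : q0 <= q <= q0 + 1 -> tm0 q.+1 = tm0 q.
  case/andP=> lo hi; rewrite -(agree q).
    by rewrite (addnC q) -addnA add1n tm0_3pow2_add // expnS; lia.
  rewrite lo leq_divRL ?expn_gt0 //= expnS.
  by move: q0_le; move: (2 ^ r) N_ge8 => N; nia.
apply: (tm0_no_cube q0); rewrite !step //; lia.
Qed.

(* Here q ranges in [2^(r+1) + 11, 2^(r+1) + 13] and t(q + m) = t(q) reduces to
   t(v + 3) = t(v) for v = 11, 12, 13. *)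
Lemma blocks_agree_pow2_add3 r : 4 <= r ->
  exists i j, i < j /\ blocks_agree (2 * 2 ^ r + 3) i j.
Proof.
move=> r_ge4; have N_ge16 : 16 <= 2 ^ r by rewrite (_ : 16 = 2 ^ 4) // leq_pexp2l.
exists (2 ^ r + 4), (2 ^ r + 4 + 2 ^ r); split; first by rewrite -addn1 leq_add2l expn_gt0.
apply/blocks_agree_pow2_shift => q.
rewrite -ltnS ltn_divLR ?leq_divRL ?expn_gt0 // => /andP [lo hi].
have [v [-> v_range]] : exists v, q = 2 * 2 ^ r + v /\ 11 <= v <= 13.
  by exists (q - 2 * 2 ^ r); split; move: (2 ^ r) N_ge16 lo hi => N; nia.
rewrite (_ : _ + _ + _ = 2 ^ r.+2 + (v + 3)); last by rewrite !expnS; lia.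
rewrite -expnS !tm0_pow2_add; try by rewrite ?expnS; lia.
by case: v v_range => [|[|[|[|[|[|[|[|[|[|[|[|[|[|]]]]]]]]]]]]]].
Qed.

Lemma no_early_repeat_pow2_add3 r i j : 4 <= r -> i < j ->
  (j + 1) * (2 * 2 ^ r + 3) <= 4 * 2 ^ r * 2 ^ r ->
  ~ blocks_agree (2 * 2 ^ r + 3) i j.
Proof.
move=> r_ge4 lt_ij j_small agree.
have N_ge16 : 16 <= 2 ^ r by rewrite (_ : 16 = 2 ^ 4) // leq_pexp2l.
have odd_m : odd (2 * 2 ^ r + 3) by rewrite oddD oddM.
have [r' er] : exists r', r = r'.+1 by exists r.-1; lia.
have lt_m : 3 * 2 ^ r' < 2 * 2 ^ r + 3 by rewrite er expnS; lia.
have /dvdnP [c ec] := blocks_agree_dvd r' _ _ _ odd_m lt_m (ltnW lt_ij) agree.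
rewrite -er in ec.
have j_lt : j < 2 * 2 ^ r by move: (2 ^ r) N_ge16 j_small => N; nia.
have ej : j = i + 2 ^ r by move: ec; case: c => [|[|c]]; lia.
rewrite ej in agree j_small; move/blocks_agree_pow2_shift: agree => agree.
have := leq_divM (i * (2 * 2 ^ r + 3)) (2 ^ r); set q0 := _ %/ _ => q0_le.
have q0_small : q0 + 5 < 2 * 2 ^ r.
  by move: j_small q0_le; move: (2 ^ r) N_ge16 => N; nia.
apply: (tm0_no_antiperiod3 q0) => k lt_k; rewrite -(agree (q0 + k)).
  by rewrite addnCA -expnS tm0_pow2_add ?negbK // expnS; lia.
rewrite leq_addr leq_divRL ?expn_gt0 //=.
by move: q0_le; move: (2 ^ r) N_ge16 => N; nia.
Qed.

Lemma frakK_3pow2_add1_gt r : 3 <= r ->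
  exists K, is_frakK (3 * 2 ^ r + 1) K /\ 10 * 2 ^ r * 2 ^ r < K * (3 * 2 ^ r + 1).
Proof.
move=> r_ge3; apply: frakK_exists_gt; first by rewrite addn1.
  exact: blocks_agree_3pow2_add1.
by move=> i j; apply: no_early_repeat_3pow2_add1.
Qed.

Lemma frakK_pow2_add3_gt r : 4 <= r ->
  exists K, is_frakK (2 * 2 ^ r + 3) K /\ 4 * 2 ^ r * 2 ^ r < K * (2 * 2 ^ r + 3).
Proof.
move=> r_ge4; apply: frakK_exists_gt; first by rewrite addn3.
  exact: blocks_agree_pow2_add3.
by move=> i j; apply: no_early_repeat_pow2_add3.
Qed.

Definition frakK_check m K : bool :=
  [&& 0 < K, ~~ anti_power K (tm_factor 1 (K * m))
    & all (fun k => anti_power k (tm_factor 1 (k * m))) (iota 1 K.-1)].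

Lemma frakK_checkP m K : frakK_check m K -> is_frakK m K.
Proof.
case/and3P=> K_gt0 notK /allP early; split=> //; split=> // k /andP [k_gt0 lt_kK].
by apply: early; rewrite mem_iota k_gt0 add1n prednK.
Qed.

Theorem lemma9 (l : nat) (hl : 3 <= l) :
  (exists K, is_frakK (3 * 2 ^ (l - 2) + 1) K /\
             5 * 2 ^ (2 * l - 3) < K * (3 * 2 ^ (l - 2) + 1)) /\
  (exists K, is_frakK (2 ^ (l - 1) + 3) K /\
             2 ^ (2 * l - 2) < K * (2 ^ (l - 1) + 3)).
Proof.
case: (ltnP l 6) => [l_small|l_ge6].
  have [->|[->|->]] : l = 3 \/ l = 4 \/ l = 5 by lia.
  - by split; [exists 7 | exists 7]; split=> //; apply: frakK_checkP; vm_compute.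
  - by split; [exists 27 | exists 15]; split=> //; apply: frakK_checkP; vm_compute.
  - by split; [exists 29 | exists 26]; split=> //; apply: frakK_checkP; vm_compute.
have [r el] : exists r, l = r.+2 by exists l.-2; lia.
rewrite el in l_ge6 *.
have -> : r.+2 - 2 = r by lia.
have -> : 2 ^ (r.+2 - 1) = 2 * 2 ^ r by rewrite subn1 expnS.
have -> : 5 * 2 ^ (2 * r.+2 - 3) = 10 * 2 ^ r * 2 ^ r.
  by rewrite (_ : _ - 3 = (r + r).+1) ?expnS ?expnD; lia.
have -> : 2 ^ (2 * r.+2 - 2) = 4 * 2 ^ r * 2 ^ r.
  by rewrite (_ : _ - 2 = (r + r).+2) ?expnS ?expnD; lia.
by split; [apply: frakK_3pow2_add1_gt | apply: frakK_pow2_add3_gt]; lia.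
Qed.
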